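(* Let $k>v_1$ and let $\varphi=(x(t),y(t))$ be the $k$-jet of an element of $\Sigma_\Gamma$. For $b\ne0$, the vector $(0,bt^k)$ belongs to $T_1$ (resp. $\widetilde T$) if and only if $k+v_0\in\Lambda^2_\varphi$ (resp. $k+v_0\in\Lambda'_\varphi$).
   Context: $\mathcal O_1=\mathbb C\{t\}$, $\mathcal O_2=\mathbb C\{X,Y\}$, with maximal ideals $\mathcal M_1,\mathcal M_2$; $\varphi^*(h)=h(x(t),y(t))$; $j^k$ denotes truncation modulo $t^{k+1}$, componentwise. $\Gamma$ is the semigroup of values of a plane branch with minimal generators $v_0<v_1<\cdots<v_g$ and conductor $c$; $\Sigma_\Gamma$ is the set of Puiseux parametrizations $(t^{v_0},t^{v_1}+\sum_{v_1<i<c}a_it^i)$ (primitive, $v_0\nmid v_1$) whose semigroup of values equals $\Gamma$. $T_1=\{j^k(x'\epsilon+\varphi^*(g),\ y'\epsilon+\varphi^*(h)):\epsilon\in\mathcal M_1^2,\ g,h\in\mathcal M_2^2\}$ and $\widetilde T$ is defined the same way but with $g\in\langle X^2,Y\rangle$, $h\in\mathcal M_2^2$ (tangent spaces to the $\mathcal A_1^k$- and $\widetilde{\mathcal A}^k$-orbits). For $\omega=h\,dX+g\,dY$ put $v_\varphi(\omega)=\mathrm{ord}_t(\varphi^*(h)x'(t)+\varphi^*(g)y'(t))+1$; $\Lambda^2_\varphi=\{v_\varphi(h\,dX+g\,dY): g,h\in\mathcal M_2^2\}$ and $\Lambda'_\varphi=\{v_\varphi(h\,dX+g\,dY): g\in\langle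 X^2,Y\rangle,\ h\in\mathcal M_2^2\}$ (only forms with nonzero pull-back considered). *)

From HB Require Import structures.
From mathcomp Require Import all_boot all_order all_algebra.
Set Implicit Arguments. Unset Strict Implicit. Unset Printing Implicit Defensive.
Import Order.TTheory GRing.Theory Num.Theory.
Local Open Scope ring_scope.

Section Defs.
Variable C : numClosedFieldType.

Definition ord (p : {poly C}) : nat := find (fun a => a != 0) (polyseq p).

Definition jet (k : nat) (p : {poly C}) : {poly C} := \poly_(i < k.+1) p`_i.

(* Bivariate polynomials h(X,Y) : {poly {poly C}}; outer variable is Y,
   inner variable is X. *)
Definition varX : {poly {poly C}} := ('X)%:P.
Definition varY : {poly {poly C}} := 'X.

Definition pullback (h : {poly {poly C}}) (x y : {poly C}) : {poly C} :=
  (map_poly (fun q : {poly C} => q \Po x) h).[y].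

Definition inM2sq (h : {poly {poly C}}) : Prop :=
  exists a b c, h = varX ^+ 2 * a + varX * varY * b + varY ^+ 2 * c.

Definition inX2Y (g : {poly {poly C}}) : Prop :=
  exists a b, g = varX ^+ 2 * a + varY * b.

Definition inM1sq (e : {poly C}) : Prop := exists a, e = 'X ^+ 2 * a.

Definition semigroup_of (x y : {poly C}) (n : nat) : Prop :=
  exists f : {poly {poly C}}, pullback f x y != 0 /\ ord (pullback f x y) = n.

Definition primitive (x y : {poly C}) : Prop :=
  ~ exists r : nat, (1 < r)%N /\
      (forall i, x`_i != 0 -> (r %| i)%N) /\ (forall i, y`_i != 0 -> (r %| i)%N).

(* Sigma_Gamma, with v the minimal generators and c the conductor of Gamma *)
Definition in_Sigma (Gam : nat -> Prop) (v : seq nat) (c : nat)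
    (x y : {poly C}) : Prop :=
  exists a : nat -> C,
    x = 'X ^+ (nth 0%N v 0) /\
    y = 'X ^+ (nth 0%N v 1) + \sum_((nth 0%N v 1).+1 <= i < c) a i *: 'X ^+ i /\
    primitive x y /\ ~~ (nth 0%N v 0 %| nth 0%N v 1)%N /\
    (forall n, semigroup_of x y n <-> Gam n).

Definition in_T1 (x y : {poly C}) (k : nat) (b : C) : Prop :=
  exists (e : {poly C}) (g h : {poly {poly C}}),
    inM1sq e /\ inM2sq g /\ inM2sq h /\
    jet k (x^`() * e + pullback g x y) = 0 /\
    jet k (y^`() * e + pullback h x y) = b *: 'X ^+ k.

Definition in_Ttilde (x y : {poly C}) (k : nat) (b : C) : Prop :=
  exists (e : {poly C}) (g h : {poly {poly C}}),
    inM1sq e /\ inX2Y g /\ inM2sq h /\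
    jet k (x^`() * e + pullback g x y) = 0 /\
    jet k (y^`() * e + pullback h x y) = b *: 'X ^+ k.

(* v_phi(h dX + g dY) *)
Definition vphi (x y : {poly C}) (h g : {poly {poly C}}) : {poly C} :=
  pullback h x y * x^`() + pullback g x y * y^`().

Definition in_Lambda2 (x y : {poly C}) (n : nat) : Prop :=
  exists g h, inM2sq g /\ inM2sq h /\ vphi x y h g != 0 /\
    n = (ord (vphi x y h g)).+1.

Definition in_Lambda' (x y : {poly C}) (n : nat) : Prop :=
  exists g h, inX2Y g /\ inM2sq h /\ vphi x y h g != 0 /\
    n = (ord (vphi x y h g)).+1.
End Defs.

Definition Ncomb (v : seq nat) (n : nat) : Prop :=
  exists m : seq nat, size m = size v /\
    n = (\sum_(i < size v) nth 0%N m i * nth 0%N v i)%N.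

Definition min_generators (Gam : nat -> Prop) (v : seq nat) : Prop :=
  sorted ltn v /\ (forall n, Gam n <-> Ncomb v n) /\
  (forall i, (i < size v)%N -> ~ Ncomb (take i v ++ drop i.+1 v) (nth 0%N v i)).

Definition conductor (Gam : nat -> Prop) (c : nat) : Prop :=
  (forall n, (c <= n)%N -> Gam n) /\
  (forall c', (forall n, (c' <= n)%N -> Gam n) -> (c <= c')%N).

From HB Require Import structures.
From mathcomp Require Import all_boot all_order all_algebra.
Import Order.TTheory GRing.Theory Num.Theory.
Set Implicit Arguments. Unset Strict Implicit. Unset Printing Implicit Defensive.
Local Open Scope ring_scope.

(* Proof of Proposition 3.3.  After truncation, phi = (t^v0, y) with
   y = t^(v0+1) * Y1 (because v0 < v1 < k).  Put
     A = x' e + phi^*(g),    B = y' e + phi^*(h).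
   The key identity is  B x' - A y' = phi^*(h) x' - phi^*(g) y', i.e. the
   pull-back of the form  h dX - g dY  does not depend on e.
   - If j^k A = 0 and j^k B = b t^k, then t^(k+1) | A and B = t^k (b + ...),
     so the form  h dX - g dY  pulls back to t^(v0-1+k) (v0 b + t(...)),
     whose value is k + v0.
   - Conversely, if the form  h dX + g dY  has value k + v0, then since
     g in <X^2,Y> gives phi^*(g) = t^(v0+1) G, choosing e = s t^2 G makes
     A = 0 for the form (-s g, s h), and B = s t^k W with W(0) != 0; a
     suitable constant s makes j^k B = b t^k. *)

Section Preliminaries.
Variable C : numClosedFieldType.
Implicit Types (e p q x y : {poly C}) (g h : {poly {poly C}}).

Lemma pullbackE h x y : pullback h x y = (map_poly (comp_poly x) h).[y].
Proof. by []. Qed.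

Lemma pullbackD g h x y : pullback (g + h) x y = pullback g x y + pullback h x y.
Proof. by rewrite !pullbackE rmorphD hornerD. Qed.

Lemma pullbackN g x y : pullback (- g) x y = - pullback g x y.
Proof. by rewrite !pullbackE rmorphN hornerN. Qed.

Lemma pullbackM g h x y : pullback (g * h) x y = pullback g x y * pullback h x y.
Proof. by rewrite !pullbackE rmorphM hornerM. Qed.

Lemma pullbackX x y : pullback (varX C) x y = x.
Proof. by rewrite pullbackE /varX map_polyC hornerC; apply: comp_polyX. Qed.

Lemma pullbackY x y : pullback (varY C) x y = y.
Proof. by rewrite pullbackE /varY map_polyX hornerX. Qed.

Lemma pullbackC (s : C) x y : pullback s%:P%:P x y = s%:P.
Proof. by rewrite pullbackE map_polyC hornerC; apply: comp_polyC. Qed.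

Lemma divXn_of_low_coef n p :
  (forall i, (i < n)%N -> p`_i = 0) -> exists q, p = 'X^n * q.
Proof.
move=> low; exists (\poly_(i < size p) p`_(i + n)).
apply/polyP=> i; rewrite coefXnM coef_poly.
case: ltnP => [/low -> //|le_ni].
case: ltnP => [|lt_p]; first by rewrite subnK.
by rewrite nth_default // (leq_trans lt_p) // leq_subr.
Qed.

Lemma coefXnM_self n q : ('X^n * q)`_n = q`_0.
Proof. by rewrite coefXnM ltnn subnn. Qed.

Lemma ordXnM n q : q`_0 != 0 -> ord ('X^n * q) = n.
Proof.
move=> q0; have low i : (i < n)%N -> ('X^n * q)`_i = 0.
  by move=> lt_in; rewrite coefXnM lt_in.
have lt_size : (n < size ('X^n * q)%R)%N.
  by rewrite ltnNge; apply: contra q0 => le; rewrite -(coefXnM_self n) nth_default.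
have has_nz : has (fun a => a != 0) ('X^n * q).
  by apply/(has_nthP 0); exists n; rewrite // coefXnM_self.
rewrite /ord; case: (ltngtP (find (fun a => a != 0) ('X^n * q)) n) => // cmp.
- by have := nth_find 0 has_nz; rewrite low ?eqxx.
- by have := before_find 0 cmp; rewrite coefXnM_self q0.
Qed.

Lemma ord_factor p : p != 0 -> exists2 q, p = 'X^(ord p) * q & q`_0 != 0.
Proof.
move=> p0; have has_nz : has (fun a => a != 0) p.
  apply/(has_nthP 0); exists (size p).-1.
    by rewrite ltn_predL size_poly_gt0.
  by rewrite -lead_coefE lead_coef_eq0.
have [q pE] : exists q, p = 'X^(ord p) * q.
  by apply: divXn_of_low_coef => i /(before_find 0) /negbFE /eqP.
by exists q; rewrite // -(coefXnM_self (ord p)) -pE; apply: (nth_find 0 has_nz).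
Qed.

Lemma coef_jet k p i : (jet k p)`_i = if (i < k.+1)%N then p`_i else 0.
Proof. by rewrite coef_poly. Qed.

Lemma jet0 k : jet k (0 : {poly C}) = 0.
Proof. by apply/polyP => i; rewrite coef_jet coef0 if_same. Qed.

Lemma jetXnM k q : jet k ('X^k * q) = q`_0 *: 'X^k.
Proof.
apply/polyP=> i; rewrite coef_jet coefXnM coefZ coefXn.
case: (ltngtP i k) => [lt_ik|lt_ki|->]; last by rewrite ltnSn subnn mulr1.
- by rewrite ltnS ltnW // mulr0.
- by rewrite ltnS leqNgt lt_ki mulr0.
Qed.

Lemma inM2sqM r g : inM2sq g -> inM2sq (r * g).
Proof.
case=> a [b [c ->]]; exists (r * a), (r * b), (r * c).
by rewrite !mulrDr !(mulrCA r).
Qed.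

Lemma inX2YM r g : inX2Y g -> inX2Y (r * g).
Proof. by case=> a [b ->]; exists (r * a), (r * b); rewrite mulrDr !(mulrCA r). Qed.

Lemma inM2sq_X2Y g : inM2sq g -> inX2Y g.
Proof.
case=> a [b [c ->]]; exists a, (varX C * b + varY C * c).
by rewrite mulrDr !mulrA addrA [varX C * varY C]mulrC expr2.
Qed.

(* The e-terms cancel: the form h dX - g dY pulls back to B x' - A y'. *)
Lemma vphi_tangent e x y g h :
  vphi x y h (- g) =
  (y^`() * e + pullback h x y) * x^`() - (x^`() * e + pullback g x y) * y^`().
Proof.
rewrite /vphi pullbackN mulNr !mulrDl opprD addrACA.
by rewrite [y^`() * e * _]mulrAC [x^`() * e * _]mulrAC [y^`() * _]mulrC subrr add0r.
Qed.

End Preliminaries.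

Section Parametrization.
Variables (C : numClosedFieldType) (v0 : nat) (x y Y1 : {poly C}).
Hypotheses (v0_gt0 : (0 < v0)%N) (x_def : x = 'X^v0) (y_def : y = 'X^(v0.+1) * Y1).
Implicit Types (e : {poly C}) (g h : {poly {poly C}}) (b : C).

Lemma deriv_x : x^`() = v0%:R *: 'X^(v0.-1).
Proof. by rewrite x_def derivXn scaler_nat. Qed.

Lemma deriv_y : exists D, y^`() = 'X^v0 * D.
Proof.
apply: divXn_of_low_coef => i lt_iv0.
by rewrite coef_deriv y_def coefXnM ltnS lt_iv0 mul0rn.
Qed.

Lemma pullback_X2Y g : inX2Y g -> exists G, pullback g x y = 'X^(v0.+1) * G.
Proof.
case=> a [b ->]; exists ('X^(v0.-1) * pullback a x y + Y1 * pullback b x y).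
rewrite pullbackD !pullbackM pullbackX pullbackY x_def y_def mulrDr !mulrA.
by rewrite -!exprD addSnnS prednK.
Qed.

Lemma tangent_value k e g h b : b != 0 ->
  jet k (x^`() * e + pullback g x y) = 0 ->
  jet k (y^`() * e + pullback h x y) = b *: 'X^k ->
  vphi x y h (- g) != 0 /\ (k + v0)%N = (ord (vphi x y h (- g))).+1.
Proof.
move=> b0 jetA jetB; have [D dy] := deriv_y.
have [A eA] : exists A, x^`() * e + pullback g x y = 'X^(k.+1) * A.
  apply: divXn_of_low_coef => i lt_ik; move/(congr1 (fun p : {poly C} => p`_i)): jetA.
  by rewrite coef_jet lt_ik coef0.
have [B eB] : exists B, y^`() * e + pullback h x y = 'X^k * B.
  apply: divXn_of_low_coef => i lt_ik; move/(congr1 (fun p : {poly C} => p`_i)): jetB.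
  by rewrite coef_jet ltnS ltnW // coefZ coefXn ltn_eqF // mulr0.
have B0 : B`_0 = b.
  move: jetB; rewrite eB jetXnM => /(congr1 (fun p : {poly C} => p`_k)).
  by rewrite !coefZ coefXn eqxx !mulr1.
set W := v0%:R *: B - 'X^2 * (A * D).
have eV : vphi x y h (- g) = 'X^(v0.-1 + k) * W.
  rewrite (vphi_tangent e) eA eB deriv_x dy /W mulrBr; congr (_ - _).
    by rewrite -!scalerAr mulrAC -exprD addnC.
  rewrite mulrA [_ * A * _]mulrAC -exprD -mulrA ['X^(v0.-1 + k) * _]mulrA -exprD.
  congr ('X^_ * _).
  by rewrite addn2 -[in RHS]addSn prednK // addSn addnC.
have W0 : W`_0 != 0.
  by rewrite /W coefB coefZ B0 coefXnM /= subr0 mulf_neq0 ?pnatr_eq0 -?lt0n.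
split.
  rewrite eV mulf_neq0 ?expf_neq0 ?polyX_eq0 //.
  by apply: contraNneq W0 => ->; rewrite coef0.
by rewrite eV ordXnM // -addSn prednK // addnC.
Qed.

(* Conversely, a nonzero form h dX + g dY of value k + v0 with g in
   <X^2, Y> yields the tangent vector (0, b t^k) from (s t^2 G, -s g, s h). *)
Lemma value_tangent k g h b : b != 0 -> inX2Y g ->
  vphi x y h g != 0 -> (k + v0)%N = (ord (vphi x y h g)).+1 ->
  exists (s : C) (e : {poly C}), inM1sq e /\
    jet k (x^`() * e + pullback ((- s)%:P%:P * g) x y) = 0 /\
    jet k (y^`() * e + pullback (s%:P%:P * h) x y) = b *: 'X^k.
Proof.
move=> b0 /pullback_X2Y [G eG] V0 value.
have ordV : ord (vphi x y h g) = (v0.-1 + k)%N.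
  by apply/eqP; rewrite -eqSS -value -addSn prednK // addnC.
have [W eV W0] := ord_factor V0; rewrite ordV in eV.
have eG' : pullback g x y = 'X^(v0.-1) * ('X^2 * G).
  by rewrite eG mulrA -exprD addn2 prednK.
have form_eq : pullback h x y *+ v0 + 'X^2 * G * y^`() = 'X^k * W.
  apply: (@mulfI _ 'X^(v0.-1)); first by rewrite expf_neq0 ?polyX_eq0.
  rewrite mulrA -exprD -eV /vphi eG' deriv_x mulrDr !mulrA; congr (_ + _).
  by rewrite -scalerAr scaler_nat mulrnAr mulrC.
set s := b / W`_0.
exists (s * v0%:R), (s *: ('X^2 * G)); split; first by exists (s *: G); rewrite scalerAr.
split.
  rewrite pullbackM pullbackC mul_polyC deriv_x eG' -scalerAl -scalerAr scalerA.
  by rewrite scaleNr mulrC subrr jet0.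
rewrite pullbackM pullbackC mul_polyC -[(s * _) *: _]scalerA scaler_nat.
rewrite -scalerAr mulrC addrC.
by rewrite -scalerDr form_eq scalerAr jetXnM coefZ /s divfK.
Qed.

(* Both directions together, for any ideal P of g's contained in <X^2, Y>:
   this covers T_1 / Lambda^2 (P = M_2^2) and T~ / Lambda' (P = <X^2, Y>). *)
Lemma tangent_iff_value (P : {poly {poly C}} -> Prop) k b : b != 0 ->
  (forall r g, P g -> P (r * g)) -> (forall g, P g -> inX2Y g) ->
  (exists e g h, inM1sq e /\ P g /\ inM2sq h /\
     jet k (x^`() * e + pullback g x y) = 0 /\
     jet k (y^`() * e + pullback h x y) = b *: 'X^k) <->
  (exists g h, P g /\ inM2sq h /\ vphi x y h g != 0 /\
     (k + v0)%N = (ord (vphi x y h g)).+1).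
Proof.
move=> b0 P_ideal P_X2Y; split.
- case=> e [g [h [_ [Pg [Mh [jetA jetB]]]]]].
  have [V0 value] := tangent_value b0 jetA jetB.
  by exists (- g), h; split; first by rewrite -mulN1r; exact: P_ideal.
- case=> g [h [Pg [Mh [V0 value]]]].
  have [s [e [Me [jetA jetB]]]] := value_tangent b0 (P_X2Y g Pg) V0 value.
  by exists e, ((- s)%:P%:P * g), (s%:P%:P * h); do !split; auto; exact: inM2sqM.
Qed.

End Parametrization.

Lemma jet_Sigma_shape (C : numClosedFieldType) (Gam : nat -> Prop) (v : seq nat)
    (c : nat) (psix psiy : {poly C}) (k : nat) :
  min_generators Gam v -> (1 < size v)%N -> in_Sigma Gam v c psix psiy ->
  (nth 0%N v 1 < k)%N ->
  [/\ (0 < nth 0%N v 0)%N, jet k psix = 'X^(nth 0%N v 0) &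
      exists Y1, jet k psiy = 'X^((nth 0%N v 0).+1) * Y1].
Proof.
move=> [v_sorted [_ v_min]] v_size [a [psix_def [psiy_def _]]] lt_v1k.
have lt_v01 : (nth 0%N v 0 < nth 0%N v 1)%N.
  move: v_sorted v_size; case: v {v_min psix_def psiy_def lt_v1k} => [|? [|? ?]] //=.
  by case/andP.
split.
- (* v0 = 0 would be an N-combination of the other generators (the empty one) *)
  rewrite lt0n; apply/eqP => v00; apply: (v_min 0%N (ltnW v_size)); rewrite v00.
  exists (nseq (size (take 0 v ++ drop 1 v)) 0%N); split; first by rewrite size_nseq.
  by rewrite big1 // => i _; rewrite nth_nseq if_same mul0n.
- apply/polyP => i; rewrite coef_jet psix_def.
  case: ltnP => // lt_ki; rewrite coefXn gtn_eqF //.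
  exact: ltn_trans lt_v01 (ltn_trans lt_v1k lt_ki).
- apply: divXn_of_low_coef => i; rewrite ltnS => le_iv0.
  rewrite coef_jet; case: ifP => // _.
  have lt_iv1 := leq_ltn_trans le_iv0 lt_v01.
  rewrite psiy_def coefD coefXn ltn_eqF // add0r coef_sum big_nat_cond big1 // => j.
  case/andP=> /andP[lt_v1j _] _; rewrite coefZ coefXn ltn_eqF ?mulr0 //.
  exact: ltn_trans lt_iv1 lt_v1j.
Qed.

Theorem proposition3p3 (C : numClosedFieldType) (Gam : nat -> Prop)
    (v : seq nat) (c : nat) (psix psiy : {poly C}) (k : nat) (b : C) :
  min_generators Gam v -> (1 < size v)%N -> conductor Gam c ->
  in_Sigma Gam v c psix psiy ->
  (nth 0%N v 1 < k)%N -> b != 0 ->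
  let x := jet k psix in let y := jet k psiy in
  (in_T1 x y k b <-> in_Lambda2 x y (k + nth 0%N v 0)%N) /\
  (in_Ttilde x y k b <-> in_Lambda' x y (k + nth 0%N v 0)%N).
Proof.
move=> gens v_size _ Sigma lt_v1k b0 x y.
have [v0_gt0 x_def [Y1 y_def]] := jet_Sigma_shape gens v_size Sigma lt_v1k.
split.
- exact: (tangent_iff_value v0_gt0 x_def y_def (P := @inM2sq C) k b0
           (@inM2sqM C) (@inM2sq_X2Y C)).
- exact: (tangent_iff_value v0_gt0 x_def y_def (P := @inX2Y C) k b0
           (@inX2YM C) (fun g gX => gX)).
Qed.
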